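(* Let $\mathcal C=(c^{(i)}_{j,k})$ be a sequence such that there exist $a\in\mathbb R$ and $C_0>0$ with $|c^{(i)}_{j,k}|\le C_0 2^{aj}$ for all $i,j,k$. For $J\ge 0$ and $x\in\mathbb R^d$ put $P_{J,\mathcal C}(x)=\sum_{j=0}^{J}\sum_{i=1}^{N}\sum_{k\in\mathbb Z^d}c^{(i)}_{j,k}\psi^{(i)}_{j,k}(x)$. (1) Let $\gamma<0$ and $x\in\mathbb R^d$. If there is $C_1>0$ such that $|c^{(i)}_{j,k}\psi^{(i)}_{j,k}(x)|\le C_1 2^{\gamma j}$ for all $i,j,k$, then $P_{J,\mathcal C}(x)$ has a limit $f_{\mathcal C}(x)$ as $J\to+\infty$, and for every $\gamma'>\gamma$ there is $C_2>0$ such that $|f_{\mathcal C}(x)-P_{J,\mathcal C}(x)|\le C_2 2^{\gamma' J}$ for all $J\ge0$. (2) Let $\gamma>0$ and $x\in\mathbb R^d$. If the sequence $(P_{j,\mathcal C}(x))_j$ diverges at rate $\gamma$, i.e. there exist $C>0$ and $j_n\to+\infty$ with $|P_{j_n,\mathcal C}(x)|\ge C2^{\gamma j_n}$, then for every $\delta<\gamma$ the wavelet series of $\mathcal C$ diverges at rate at least $\delta$ at $x$, i.e. $\mathcal C\in D^\delta(x)$.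
   Context: Fix integers $d\ge1$, $N\ge1$ and bounded functions $\psi^{(1)},\dots,\psi^{(N)}:\mathbb R^d\to\mathbb C$ with fast decay (for every $n>0$ there is $C_n$ with $|\psi^{(i)}(x)|\le C_n(1+|x|)^{-n}$ for all $x$). The associated wavelet system is $\psi^{(i)}_{j,k}(x)=\psi^{(i)}(2^jx-k)$, $1\le i\le N$, $j\ge0$ an integer, $k\in\mathbb Z^d$ (no orthogonality, normalisation or vanishing moments are assumed). A sequence is a family $\mathcal C=(c^{(i)}_{j,k})$ of complex numbers; its wavelet series is $\sum_{j\ge0}\sum_{i=1}^N\sum_{k\in\mathbb Z^d}c^{(i)}_{j,k}\psi^{(i)}_{j,k}(x)$. For $\gamma\in\mathbb R$ and $x\in\mathbb R^d$, we write $\mathcal C\in D^\gamma(x)$ (''the wavelet series diverges at rate at least $\gamma$ at $x$'') if there exist $C>0$ and indices $(i_n,j_n,k_n)$ with $j_n\to+\infty$ and $|c^{(i_n)}_{j_n,k_n}\psi^{(i_n)}_{j_n,k_n}(x)|\ge C2^{\gamma j_n}$ for all $n$. *)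

From Stdlib Require Export Reals Lra Lia ZArith List ClassicalEpsilon.
Export ListNotations.
Open Scope R_scope.

Definition Cx := (R * R)%type.
Definition C0 : Cx := (0, 0).
Definition Cadd (z w : Cx) : Cx := (fst z + fst w, snd z + snd w).
Definition Csub (z w : Cx) : Cx := (fst z - fst w, snd z - snd w).
Definition Cmul (z w : Cx) : Cx :=
  (fst z * fst w - snd z * snd w, fst z * snd w + snd z * fst w).
Definition Cmod (z : Cx) : R := sqrt (fst z * fst z + snd z * snd z).

Definition Ccv (u : nat -> Cx) (l : Cx) : Prop :=
  forall eps, eps > 0 -> exists n0, forall n, (n >= n0)%nat -> Cmod (Csub (u n) l) < eps.

(* Points of R^d and Z^d are lists of length d. *)
Definition Rnorm (x : list R) : R := sqrt (fold_right (fun t s => t * t + s) 0 x).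

(* psi_{j,k}(x) = psi(2^j x - k): the argument 2^j x - k. *)
Definition dil (j : nat) (k : list Z) (x : list R) : list R :=
  map (fun p => 2 ^ j * fst p - IZR (snd p)) (combine x k).

Definition zrange (M : nat) : list Z :=
  map (fun n => (Z.of_nat n - Z.of_nat M)%Z) (seq 0 (2 * M + 1)).
Fixpoint cube (d M : nat) : list (list Z) :=
  match d with
  | O => [ [] ]
  | S d' => flat_map (fun z => map (cons z) (cube d' M)) (zrange M)
  end.

Definition Csum (l : list Cx) : Cx := fold_right Cadd C0 l.

(* Sum over k in Z^d: limit of the partial sums over the cubes [-M,M]^d
   (chosen by epsilon; meaningful when the limit exists). *)
Definition kseries (d : nat) (g : list Z -> Cx) : Cx :=
  epsilon (inhabits C0) (fun l => Ccv (fun M => Csum (map g (cube d M))) l).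

(* Coefficient sequences: c i j k, i in {0..N-1} (0-based), j in nat, k in Z^d. *)
Definition term (psi : nat -> list R -> Cx) (c : nat -> nat -> list Z -> Cx)
  (i j : nat) (k : list Z) (x : list R) : Cx :=
  Cmul (c i j k) (psi i (dil j k x)).

Definition PJ (d N : nat) (psi : nat -> list R -> Cx) (c : nat -> nat -> list Z -> Cx)
  (J : nat) (x : list R) : Cx :=
  Csum (map (fun j => Csum (map (fun i => kseries d (fun k => term psi c i j k x))
                                 (seq 0 N)))
            (seq 0 (S J))).

Definition tends_to_infty (u : nat -> nat) : Prop :=
  forall M : nat, exists n0, forall n, (n >= n0)%nat -> (u n >= M)%nat.

Definition Dgamma (d N : nat) (psi : nat -> list R -> Cx) (c : nat -> nat -> list Z -> Cx)
  (gamma : R) (x : list R) : Prop :=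
  exists C, C > 0 /\
  exists (i_ j_ : nat -> nat) (k_ : nat -> list Z),
    tends_to_infty j_ /\
    forall n, (i_ n < N)%nat /\ length (k_ n) = d /\
      Cmod (term psi c (i_ n) (j_ n) (k_ n) x) >= C * Rpower 2 (gamma * INR (j_ n)).

From Stdlib Require Import Reals Psatz Classical.
Open Scope R_scope.

(* Interpolating the bound |c| <= C0' 2^(a j) against the fast decay of psi
   shows that if every term of level j satisfies |c psi_{j,k}(x)| <= A, then the level
   sum over k is at most K A^(1-e) 2^(a e j), a bound summable over the lattice Z^d.
   Hence a term rate 2^(g0 j) passes to the level sums with an arbitrarily small loss
   of exponent.  For g0 = gamma < 0 the partial sums P_J are those of a geometric
   series, which gives (1).  For (2), if the terms were eventually below 2^(delta j),
   the level sums would be O(2^(e j)) for some e < gamma, hence |P_J| = O(2^(e J)),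
   contradicting divergence at rate gamma. *)

Definition rsum (l : list R) : R := fold_right Rplus 0 l.

Lemma rsum_app l1 l2 : rsum (l1 ++ l2) = rsum l1 + rsum l2.
Proof. unfold rsum. induction l1 as [|t l1 IH]; cbn; [lra|]. rewrite IH; lra. Qed.

Lemma rsum_map_flat_map {A B} (f : B -> R) (g : A -> list B) l :
  rsum (map f (flat_map g l)) = rsum (map (fun z => rsum (map f (g z))) l).
Proof. induction l as [|z l IH]; cbn; auto. rewrite map_app, rsum_app, IH. reflexivity. Qed.

Lemma rsum_le {A} (f g : A -> R) l :
  (forall a, In a l -> f a <= g a) -> rsum (map f l) <= rsum (map g l).
Proof.
  induction l as [|b l IH]; cbn; intros H; [lra|].
  pose proof (H b (or_introl eq_refl)). pose proof (IH (fun a ha => H a (or_intror ha))).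
  unfold rsum in *. lra.
Qed.

Lemma rsum_const {A} (b : R) (l : list A) : rsum (map (fun _ => b) l) = INR (length l) * b.
Proof. unfold rsum. induction l as [|a l IH]; cbn -[INR]; [simpl; lra|]. rewrite IH, S_INR. lra. Qed.

Lemma rsum_nonneg {A} (f : A -> R) l : (forall a, In a l -> 0 <= f a) -> 0 <= rsum (map f l).
Proof.
  intros H. apply Rle_trans with (rsum (map (fun _ => 0) l)).
  - rewrite rsum_const. lra.
  - apply rsum_le. exact H.
Qed.

Lemma rsum_plus {A} (f g : A -> R) l :
  rsum (map (fun a => f a + g a) l) = rsum (map f l) + rsum (map g l).
Proof. unfold rsum. induction l as [|a l IH]; cbn; [lra|]. rewrite IH; lra. Qed.

Lemma rsum_minus {A} (f g : A -> R) l :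
  rsum (map (fun a => f a - g a) l) = rsum (map f l) - rsum (map g l).
Proof. unfold rsum. induction l as [|a l IH]; cbn; [lra|]. rewrite IH; lra. Qed.

Lemma rsum_scal {A} (f : A -> R) K l : rsum (map (fun a => K * f a) l) = K * rsum (map f l).
Proof. unfold rsum. induction l as [|a l IH]; cbn; [lra|]. rewrite IH; lra. Qed.

Lemma rsum_telescope (h : nat -> R) L :
  rsum (map (fun n => h n - h (S n)) (seq 0 L)) = h 0%nat - h L.
Proof.
  induction L as [|L IH]; [cbn; lra|].
  rewrite seq_S, map_app, rsum_app, IH. unfold rsum; cbn. lra.
Qed.

Lemma Rabs_le_between x b : Rabs x <= b -> -b <= x <= b.
Proof. intros H. pose proof (Rle_abs x). pose proof (Rle_abs (- x)). rewrite Rabs_Ropp in *. lra. Qed.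

Lemma Cmod_ge0 z : 0 <= Cmod z.
Proof. apply sqrt_pos. Qed.

Lemma Rabs_fst_le_Cmod z : Rabs (fst z) <= Cmod z.
Proof. unfold Cmod. rewrite <- sqrt_Rsqr_abs. apply sqrt_le_1_alt. unfold Rsqr. nra. Qed.

Lemma Rabs_snd_le_Cmod z : Rabs (snd z) <= Cmod z.
Proof. unfold Cmod. rewrite <- sqrt_Rsqr_abs. apply sqrt_le_1_alt. unfold Rsqr. nra. Qed.

Lemma Cmod_le_Rabs_fst_snd z : Cmod z <= Rabs (fst z) + Rabs (snd z).
Proof.
  destruct z as [u v]; unfold Cmod; cbn.
  rewrite <- (sqrt_Rsqr (Rabs u + Rabs v)) by (pose proof (Rabs_pos u); pose proof (Rabs_pos v); lra).
  apply sqrt_le_1_alt. pose proof (Rsqr_abs u); pose proof (Rsqr_abs v). unfold Rsqr in *.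
  pose proof (Rabs_pos u); pose proof (Rabs_pos v). nra.
Qed.

Lemma Cmod_mul z w : Cmod (Cmul z w) = Cmod z * Cmod w.
Proof. unfold Cmod, Cmul; cbn. rewrite <- sqrt_mult_alt by nra. f_equal. ring. Qed.

(* Squaring reduces the triangle inequality to Cauchy-Schwarz, [z.w <= |z| |w|]. *)
Lemma Cmod_triangle z w : Cmod (Cadd z w) <= Cmod z + Cmod w.
Proof.
  destruct z as [z1 z2], w as [w1 w2]; unfold Cmod, Cadd; cbn.
  set (a := z1 * z1 + z2 * z2); set (b := w1 * w1 + w2 * w2).
  assert (Ha : 0 <= a) by (unfold a; nra). assert (Hb : 0 <= b) by (unfold b; nra).
  pose proof (sqrt_pos a); pose proof (sqrt_pos b).
  assert (Hab : z1 * w1 + z2 * w2 <= sqrt a * sqrt b).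
  { rewrite <- sqrt_mult by lra.
    apply Rsqr_incr_0_var; [|apply sqrt_pos].
    rewrite Rsqr_sqrt by nra. unfold Rsqr, a, b.
    pose proof (Rle_0_sqr (z1 * w2 - z2 * w1)). unfold Rsqr in *. nra. }
  rewrite <- (sqrt_Rsqr (sqrt a + sqrt b)) by lra. apply sqrt_le_1_alt.
  unfold Rsqr. pose proof (sqrt_sqrt a Ha); pose proof (sqrt_sqrt b Hb). unfold a, b in *. nra.
Qed.

Lemma Cmod_Csum_le l : Cmod (Csum l) <= rsum (map Cmod l).
Proof.
  induction l as [|z l IH].
  - unfold Cmod, C0; cbn. replace (0 * 0 + 0 * 0) with 0 by ring. rewrite sqrt_0. lra.
  - change (Cmod (Cadd z (Csum l)) <= Cmod z + rsum (map Cmod l)).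
    eapply Rle_trans; [apply Cmod_triangle|]. lra.
Qed.

Lemma fst_Csum l : fst (Csum l) = rsum (map fst l).
Proof.
  induction l as [|z l IH]; [reflexivity|].
  change (fst z + fst (Csum l) = fst z + rsum (map fst l)). rewrite IH. reflexivity.
Qed.

Lemma snd_Csum l : snd (Csum l) = rsum (map snd l).
Proof.
  induction l as [|z l IH]; [reflexivity|].
  change (snd z + snd (Csum l) = snd z + rsum (map snd l)). rewrite IH. reflexivity.
Qed.

Lemma Csum_app l1 l2 : Csum (l1 ++ l2) = Cadd (Csum l1) (Csum l2).
Proof.
  induction l1 as [|z l1 IH].
  - change (Csum l2 = Cadd C0 (Csum l2)).
    destruct (Csum l2); unfold Cadd, C0; cbn. f_equal; ring.
  - change (Cadd z (Csum (l1 ++ l2)) = Cadd (Cadd z (Csum l1)) (Csum l2)).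
    rewrite IH. unfold Cadd; cbn. f_equal; ring.
Qed.

Lemma Csub_Cadd_l z w : Csub (Cadd z w) z = w.
Proof. destruct z, w; unfold Csub, Cadd; cbn. f_equal; ring. Qed.

Lemma Cmod_le_Csub z w : Cmod z <= Cmod (Csub z w) + Cmod w.
Proof.
  replace z with (Cadd (Csub z w) w) at 1 by (destruct z, w; unfold Csub, Cadd; cbn; f_equal; ring).
  apply Cmod_triangle.
Qed.

Lemma Ccv_fst u l : Ccv u l -> Un_cv (fun n => fst (u n)) (fst l).
Proof.
  intros H eps Heps. destruct (H eps Heps) as [n0 Hn0]. exists n0. intros n Hn.
  exact (Rle_lt_trans _ _ _ (Rabs_fst_le_Cmod (Csub (u n) l)) (Hn0 n Hn)).
Qed.

Lemma Ccv_snd u l : Ccv u l -> Un_cv (fun n => snd (u n)) (snd l).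
Proof.
  intros H eps Heps. destruct (H eps Heps) as [n0 Hn0]. exists n0. intros n Hn.
  exact (Rle_lt_trans _ _ _ (Rabs_snd_le_Cmod (Csub (u n) l)) (Hn0 n Hn)).
Qed.

Lemma Ccv_pair u l1 l2 :
  Un_cv (fun n => fst (u n)) l1 -> Un_cv (fun n => snd (u n)) l2 -> Ccv u (l1, l2).
Proof.
  intros H1 H2 eps Heps.
  destruct (H1 (eps / 2) ltac:(lra)) as [n1 Hn1], (H2 (eps / 2) ltac:(lra)) as [n2 Hn2].
  exists (max n1 n2). intros n Hn. eapply Rle_lt_trans; [apply Cmod_le_Rabs_fst_snd|].
  pose proof (Hn1 n ltac:(lia)); pose proof (Hn2 n ltac:(lia)). unfold R_dist in *. cbn. lra.
Qed.

Lemma Ccv_unique u l l' : Ccv u l -> Ccv u l' -> l = l'.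
Proof.
  intros H H'. destruct l, l'.
  pose proof (UL_sequence _ _ _ (Ccv_fst _ _ H) (Ccv_fst _ _ H')).
  pose proof (UL_sequence _ _ _ (Ccv_snd _ _ H) (Ccv_snd _ _ H')). cbn in *. subst. reflexivity.
Qed.

Lemma kseries_eq d g l : Ccv (fun M => Csum (map g (cube d M))) l -> kseries d g = l.
Proof.
  intros H. apply (Ccv_unique (fun M => Csum (map g (cube d M)))); auto.
  exact (epsilon_spec (inhabits C0) _ (ex_intro _ l H)).
Qed.

(** * Sequences with dominated increments *)

Lemma Rabs_telescope (u F : nat -> R) J0 :
  (forall M, (J0 <= M)%nat -> Rabs (u (S M) - u M) <= F (S M) - F M) ->
  forall J, (J0 <= J)%nat -> Rabs (u J - u J0) <= F J - F J0.
Proof.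
  intros H J HJ. induction HJ as [|J HJ IH].
  - unfold Rminus. rewrite Rplus_opp_r, Rabs_R0. lra.
  - pose proof (H J HJ).
    replace (u (S J) - u J0) with ((u (S J) - u J) + (u J - u J0)) by ring.
    eapply Rle_trans; [apply Rabs_triang|]. lra.
Qed.

Lemma Rabs_lim_le (v : nat -> R) l c b M :
  Un_cv v l -> (forall n, (M <= n)%nat -> Rabs (v n - c) <= b) -> Rabs (l - c) <= b.
Proof.
  intros Hv Hb. destruct (Rle_dec (Rabs (l - c)) b) as [Hle|Hgt]; [exact Hle|exfalso].
  destruct (Hv (Rabs (l - c) - b) ltac:(lra)) as [n0 Hn0].
  pose proof (Hn0 (max n0 M) ltac:(lia)) as Hclose. pose proof (Hb (max n0 M) ltac:(lia)).
  unfold R_dist in Hclose. rewrite Rabs_minus_sym in Hclose.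
  pose proof (Rabs_triang (l - v (max n0 M)) (v (max n0 M) - c)).
  replace (l - v (max n0 M) + (v (max n0 M) - c)) with (l - c) in * by ring. lra.
Qed.

(* [u + F] and [F - u] are nondecreasing and bounded above. *)
Lemma Un_cv_of_dominated_increments (u F : nat -> R) Sb :
  (forall M, Rabs (u (S M) - u M) <= F (S M) - F M) -> (forall M, F M <= Sb) ->
  exists l, Un_cv u l /\ forall M, Rabs (l - u M) <= Sb - F M.
Proof.
  intros Hinc HSb.
  assert (Htel : forall M J, (M <= J)%nat -> Rabs (u J - u M) <= F J - F M)
    by (intros M; apply Rabs_telescope; auto).
  assert (Hup : Un_growing (fun n => u n + F n) /\ has_ub (fun n => u n + F n)).
  { split.
    - intros n. pose proof (Rabs_le_between _ _ (Hinc n)). lra.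
    - exists (u 0%nat - F 0%nat + 2 * Sb). intros y [n ->].
      pose proof (Rabs_le_between _ _ (Htel 0%nat n (Nat.le_0_l n))). pose proof (HSb n). lra. }
  assert (Hdown : Un_growing (fun n => F n - u n) /\ has_ub (fun n => F n - u n)).
  { split.
    - intros n. pose proof (Rabs_le_between _ _ (Hinc n)). lra.
    - exists (- u 0%nat - F 0%nat + 2 * Sb). intros y [n ->].
      pose proof (Rabs_le_between _ _ (Htel 0%nat n (Nat.le_0_l n))). pose proof (HSb n). lra. }
  destruct (growing_cv _ (proj1 Hup) (proj2 Hup)) as [lp Hlp].
  destruct (growing_cv _ (proj1 Hdown) (proj2 Hdown)) as [lm Hlm].
  assert (Hu : Un_cv u ((lp - lm) / 2)).
  { intros eps Heps. destruct (Hlp eps Heps) as [n1 Hn1], (Hlm eps Heps) as [n2 Hn2].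
    exists (max n1 n2). intros n Hn.
    pose proof (Hn1 n ltac:(lia)) as H1; pose proof (Hn2 n ltac:(lia)) as H2.
    unfold R_dist in *. apply Rabs_def2 in H1, H2. apply Rabs_def1; lra. }
  exists ((lp - lm) / 2). split; [exact Hu|]. intros M.
  apply (Rabs_lim_le u _ _ _ M Hu). intros n Hn.
  pose proof (Htel M n Hn). pose proof (HSb n). lra.
Qed.

Lemma Ccv_of_dominated_increments (u : nat -> Cx) (F : nat -> R) Sb :
  (forall M, Cmod (Csub (u (S M)) (u M)) <= F (S M) - F M) -> (forall M, F M <= Sb) ->
  exists l, Ccv u l /\ forall M, Cmod (Csub l (u M)) <= 2 * (Sb - F M).
Proof.
  intros Hinc HSb.
  destruct (Un_cv_of_dominated_increments (fun n => fst (u n)) F Sb) as [l1 [H1 B1]]; auto.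
  { intros M. eapply Rle_trans; [apply (Rabs_fst_le_Cmod (Csub (u (S M)) (u M)))|]. apply Hinc. }
  destruct (Un_cv_of_dominated_increments (fun n => snd (u n)) F Sb) as [l2 [H2 B2]]; auto.
  { intros M. eapply Rle_trans; [apply (Rabs_snd_le_Cmod (Csub (u (S M)) (u M)))|]. apply Hinc. }
  exists (l1, l2). split; [apply Ccv_pair; auto|]. intros M.
  eapply Rle_trans; [apply Cmod_le_Rabs_fst_snd|]. pose proof (B1 M); pose proof (B2 M). cbn. lra.
Qed.

Definition psum (u : nat -> Cx) (J : nat) : Cx := Csum (map u (seq 0 (S J))).

Lemma Csub_psum_S u J : Csub (psum u (S J)) (psum u J) = u (S J).
Proof.
  unfold psum. rewrite (seq_S (S J)), map_app, Csum_app, Csub_Cadd_l. cbn.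
  destruct (u (S J)); unfold Cadd, C0; cbn. f_equal; ring.
Qed.

Lemma psum_geometric_cv (u : nat -> Cx) b q :
  0 <= b -> 0 <= q < 1 -> (forall j, Cmod (u j) <= b * q ^ j) ->
  exists l, Ccv (psum u) l /\ forall J, Cmod (Csub l (psum u J)) <= 2 * b / (1 - q) * q ^ J.
Proof.
  intros Hb Hq Hu.
  destruct (Ccv_of_dominated_increments (psum u) (fun J => b * (1 - q ^ S J) / (1 - q)) (b / (1 - q)))
    as [l [Hl Hbound]].
  - intros M. rewrite Csub_psum_S. eapply Rle_trans; [apply Hu|]. right. cbn. field. lra.
  - intros M. pose proof (pow_le q (S M) (proj1 Hq)). unfold Rdiv.
    apply Rmult_le_compat_r; [left; apply Rinv_0_lt_compat; lra|]. nra.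
  - exists l. split; [exact Hl|]. intros J. eapply Rle_trans; [apply Hbound|].
    pose proof (pow_le q J (proj1 Hq)).
    replace (2 * (b / (1 - q) - b * (1 - q ^ S J) / (1 - q))) with (2 * b / (1 - q) * q ^ J * q)
      by (cbn; field; lra).
    assert (0 <= 2 * b / (1 - q) * q ^ J).
    { apply Rmult_le_pos; [|lra]. unfold Rdiv. apply Rmult_le_pos; [lra|].
      left; apply Rinv_0_lt_compat; lra. }
    nra.
Qed.

Lemma psum_geometric_growth (u : nat -> Cx) b r J0 :
  0 <= b -> 1 < r -> (forall j, (J0 <= j)%nat -> Cmod (u j) <= b * r ^ j) ->
  forall J, (J0 <= J)%nat -> Cmod (psum u J) <= Cmod (psum u J0) + b * r / (r - 1) * r ^ J.
Proof.
  intros Hb Hr Hu J HJ. induction HJ as [|J HJ IH].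
  - assert (0 <= b * r / (r - 1) * r ^ J0).
    { apply Rmult_le_pos; [|apply pow_le; lra]. unfold Rdiv.
      apply Rmult_le_pos; [nra|]. left; apply Rinv_0_lt_compat; lra. }
    lra.
  - eapply Rle_trans; [apply (Cmod_le_Csub _ (psum u J))|]. rewrite Csub_psum_S.
    pose proof (Hu (S J) ltac:(lia)).
    replace (b * r / (r - 1) * r ^ S J) with (b * r / (r - 1) * r ^ J + b * r ^ S J)
      by (cbn; field; lra).
    lra.
Qed.

(** * Lattice sums *)

Definition phi (s : R) : R := s / (1 + Rabs s).

Lemma Rabs_phi_le_1 s : Rabs (phi s) <= 1.
Proof.
  unfold phi, Rdiv. pose proof (Rabs_pos s).
  rewrite Rabs_mult, Rabs_inv, (Rabs_right (1 + Rabs s)) by lra.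
  apply Rmult_le_reg_r with (1 + Rabs s); [lra|].
  rewrite Rmult_assoc, Rinv_l by lra. lra.
Qed.

Lemma Rdiv_le_Rdiv_cross p1 q1 p2 q2 : 0 < q1 -> 0 < q2 -> p1 * q2 <= p2 * q1 -> p1 / q1 <= p2 / q2.
Proof.
  intros Hq1 Hq2 H. apply Rmult_le_reg_r with (q1 * q2); [nra|].
  replace (p1 / q1 * (q1 * q2)) with (p1 * q2) by (field; lra).
  replace (p2 / q2 * (q1 * q2)) with (p2 * q1) by (field; lra). exact H.
Qed.

(* [phi] is an antiderivative-like substitute for [atan]: its increments over unit
   intervals dominate the Cauchy density, and it is bounded, so the sums telescope. *)
Lemma inv_one_plus_sqr_le_phi_increment s : / (1 + s * s) <= 4 * (phi (s + 1) - phi s).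
Proof.
  unfold phi. rewrite <- (Rdiv_1_l (1 + s * s)).
  destruct (Rle_dec 0 s) as [Hs|Hs]; [|destruct (Rle_dec (-1) s) as [Hs'|Hs']].
  - rewrite (Rabs_right s), (Rabs_right (s + 1)) by lra.
    replace (4 * ((s + 1) / (1 + (s + 1)) - s / (1 + s))) with (4 / ((2 + s) * (1 + s)))
      by (field; lra).
    apply Rdiv_le_Rdiv_cross; nra.
  - rewrite (Rabs_left s), (Rabs_right (s + 1)) by lra.
    replace (4 * ((s + 1) / (1 + (s + 1)) - s / (1 + - s)))
      with (4 * (1 - 2 * s - 2 * s * s) / ((2 + s) * (1 - s))) by (field; lra).
    apply Rdiv_le_Rdiv_cross; nra.
  - rewrite (Rabs_left s), (Rabs_left (s + 1)) by lra.
    replace (4 * ((s + 1) / (1 + - (s + 1)) - s / (1 + - s))) with (4 / (s * (s - 1)))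
      by (field; lra).
    apply Rdiv_le_Rdiv_cross; nra.
Qed.

Lemma rsum_zrange_inv_one_plus_sqr_le t M :
  rsum (map (fun z => / (1 + (t - IZR z) * (t - IZR z))) (zrange M)) <= 8.
Proof.
  set (h := fun n : nat => phi (t + INR M + 1 - INR n)).
  apply Rle_trans with (4 * rsum (map (fun n => h n - h (S n)) (seq 0 (2 * M + 1)))).
  - unfold zrange. rewrite map_map, <- rsum_scal. apply rsum_le. intros n _.
    replace (h n - h (S n)) with (phi (t - IZR (Z.of_nat n - Z.of_nat M) + 1)
                                  - phi (t - IZR (Z.of_nat n - Z.of_nat M))).
    + apply inv_one_plus_sqr_le_phi_increment.
    + unfold h. rewrite minus_IZR, <- !INR_IZR_INZ, S_INR. f_equal; f_equal; ring.
  - rewrite rsum_telescope.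
    pose proof (Rabs_le_between _ _ (Rabs_phi_le_1 (t + INR M + 1 - INR 0))).
    pose proof (Rabs_le_between _ _ (Rabs_phi_le_1 (t + INR M + 1 - INR (2 * M + 1)))).
    unfold h. lra.
Qed.

Definition cube_sum (d : nat) (f : list Z -> R) (M : nat) : R := rsum (map f (cube d M)).

Lemma length_cube d M k : In k (cube d M) -> length k = d.
Proof.
  revert k; induction d as [|d IH]; cbn; intros k Hk.
  - destruct Hk as [<-|[]]; reflexivity.
  - apply in_flat_map in Hk as [z [_ Hz]]. apply in_map_iff in Hz as [v [<- Hv]].
    cbn; f_equal; auto.
Qed.

Lemma cube_sum_S d f M : cube_sum (S d) f M = rsum (map (fun z => cube_sum d (fun v => f (z :: v)) M) (zrange M)).
Proof.
  unfold cube_sum; cbn [cube]. rewrite rsum_map_flat_map. f_equal. apply map_ext. intros z.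
  rewrite map_map. reflexivity.
Qed.

Lemma zrange_S M : zrange (S M) = (- Z.of_nat (S M))%Z :: zrange M ++ [Z.of_nat (S M)].
Proof.
  unfold zrange. replace (2 * S M + 1)%nat with (S (S (2 * M + 1))) by lia.
  rewrite seq_S. change (seq 0 (S (2 * M + 1))) with (0%nat :: seq 1 (2 * M + 1)).
  rewrite <- seq_shift, map_app. cbn [map app]. rewrite map_map.
  f_equal. f_equal; [apply map_ext; intros; lia|f_equal; lia].
Qed.

Lemma rsum_zrange_le_S (G : Z -> R) M :
  (forall z, 0 <= G z) -> rsum (map G (zrange M)) <= rsum (map G (zrange (S M))).
Proof.
  intros HG. rewrite zrange_S.
  change (rsum (map G (zrange M))
          <= G (- Z.of_nat (S M))%Z + rsum (map G (zrange M ++ [Z.of_nat (S M)]))).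
  rewrite map_app, rsum_app.
  change (rsum (map G [Z.of_nat (S M)])) with (G (Z.of_nat (S M)) + 0).
  pose proof (HG (- Z.of_nat (S M))%Z). pose proof (HG (Z.of_nat (S M))). lra.
Qed.

Lemma cube_sum_nonneg d f M : (forall k, length k = d -> 0 <= f k) -> 0 <= cube_sum d f M.
Proof. intros Hf. apply rsum_nonneg. intros k Hk. apply Hf. eapply length_cube; eauto. Qed.

Lemma cube_sum_le_S d : forall f M, (forall k, length k = d -> 0 <= f k) -> cube_sum d f M <= cube_sum d f (S M).
Proof.
  induction d as [|d IH]; intros f M Hf.
  - unfold cube_sum; cbn. lra.
  - rewrite !cube_sum_S.
    apply Rle_trans with (rsum (map (fun z => cube_sum d (fun v => f (z :: v)) (S M)) (zrange M))).
    + apply rsum_le. intros z _. apply IH. intros k Hk. apply Hf. cbn; auto.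
    + apply rsum_zrange_le_S. intros z. apply cube_sum_nonneg. intros k Hk. apply Hf. cbn; auto.
Qed.

(* Cube sums of nonnegative functions increase with [M]; apply this to [h - f] and [h + f]. *)
Lemma Rabs_cube_sum_increment_le d (f h : list Z -> R) M :
  (forall k, length k = d -> Rabs (f k) <= h k) ->
  Rabs (cube_sum d f (S M) - cube_sum d f M) <= cube_sum d h (S M) - cube_sum d h M.
Proof.
  intros Hfh.
  pose proof (cube_sum_le_S d (fun k => h k - f k) M) as Hm.
  pose proof (cube_sum_le_S d (fun k => h k + f k) M) as Hp.
  unfold cube_sum in *. rewrite !rsum_minus in Hm. rewrite !rsum_plus in Hp.
  assert (Hbetween : forall k, length k = d -> - h k <= f k <= h k)
    by (intros; apply Rabs_le_between; auto).
  apply Rabs_le. split.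
  - enough (rsum (map h (cube d M)) + rsum (map f (cube d M))
            <= rsum (map h (cube d (S M))) + rsum (map f (cube d (S M)))) by lra.
    apply Hp. intros k Hk. pose proof (Hbetween k Hk). lra.
  - enough (rsum (map h (cube d M)) - rsum (map f (cube d M))
            <= rsum (map h (cube d (S M))) - rsum (map f (cube d (S M)))) by lra.
    apply Hm. intros k Hk. pose proof (Hbetween k Hk). lra.
Qed.

Definition qprod (v : list R) : R := fold_right (fun t s => (1 + t * t) * s) 1 v.
Definition sumsq (v : list R) : R := fold_right (fun t s => t * t + s) 0 v.

Lemma qprod_ge_1 v : 1 <= qprod v.
Proof. unfold qprod. induction v; cbn; nra. Qed.

Lemma sumsq_nonneg v : 0 <= sumsq v.
Proof. unfold sumsq. induction v; cbn; nra. Qed.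

Lemma qprod_le_pow_sumsq v : qprod v <= (1 + sumsq v) ^ length v.
Proof.
  induction v as [|t v IH]; [cbn; lra|].
  change (qprod (t :: v)) with ((1 + t * t) * qprod v).
  change (sumsq (t :: v)) with (t * t + sumsq v). cbn [length pow].
  pose proof (sumsq_nonneg v). pose proof (qprod_ge_1 v).
  assert ((1 + sumsq v) ^ length v <= (1 + (t * t + sumsq v)) ^ length v) by (apply pow_incr; nra).
  assert (1 <= (1 + sumsq v) ^ length v) by (apply pow_R1_Rle; lra).
  nra.
Qed.

Lemma qprod_le_pow_Rnorm v : qprod v <= (1 + Rnorm v) ^ (2 * length v).
Proof.
  eapply Rle_trans; [apply qprod_le_pow_sumsq|]. rewrite pow_mult. apply pow_incr.
  unfold Rnorm. fold (sumsq v). pose proof (sumsq_nonneg v).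
  pose proof (sqrt_pos (sumsq v)). pose proof (sqrt_sqrt (sumsq v) H). cbn. nra.
Qed.

Lemma length_dil j k x : length (dil j k x) = Nat.min (length x) (length k).
Proof. unfold dil. rewrite length_map, length_combine. reflexivity. Qed.

(* The sum factorizes over coordinates; each factor is the one-dimensional bound. *)
Lemma cube_sum_inv_qprod_dil_le d : forall x, length x = d -> forall j M,
  cube_sum d (fun k => / qprod (dil j k x)) M <= 8 ^ d.
Proof.
  induction d as [|d IH]; intros x Hx j M.
  - destruct x; [|discriminate]. unfold cube_sum, dil, qprod, rsum; cbn. lra.
  - destruct x as [|t x]; [discriminate|]. injection Hx as Hx. rewrite cube_sum_S.
    set (w := fun z => / (1 + (2 ^ j * t - IZR z) * (2 ^ j * t - IZR z))).
    assert (Hw : forall z, 0 < w z)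
      by (intros z; apply Rinv_0_lt_compat; pose proof (Rle_0_sqr (2 ^ j * t - IZR z)); unfold Rsqr in *; lra).
    apply Rle_trans with (rsum (map (fun z => 8 ^ d * w z) (zrange M))).
    + apply rsum_le. intros z _.
      replace (cube_sum d (fun v => / qprod (dil j (z :: v) (t :: x))) M)
        with (w z * cube_sum d (fun v => / qprod (dil j v x)) M).
      * rewrite Rmult_comm. apply Rmult_le_compat_r; [left; apply Hw|]. apply IH; auto.
      * unfold cube_sum. rewrite <- rsum_scal. f_equal. apply map_ext. intros v.
        unfold dil, w; cbn. rewrite Rinv_mult. reflexivity.
    + rewrite rsum_scal. cbn [pow]. rewrite (Rmult_comm 8).
      apply Rmult_le_compat_l; [apply pow_le; lra|]. apply rsum_zrange_inv_one_plus_sqr_le.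
Qed.

(* [kseries] is defined by choice; domination makes the cube partial sums converge,
   so it is their limit. *)
Lemma Cmod_kseries_le d (g : list Z -> Cx) (h : list Z -> R) Sb :
  (forall k, length k = d -> Cmod (g k) <= h k) -> (forall M, cube_sum d h M <= Sb) ->
  Cmod (kseries d g) <= 4 * Sb.
Proof.
  intros Hg HSb.
  set (u := fun M => Csum (map g (cube d M))).
  assert (Hinc : forall M, Cmod (Csub (u (S M)) (u M)) <= 2 * cube_sum d h (S M) - 2 * cube_sum d h M).
  { intros M. eapply Rle_trans; [apply Cmod_le_Rabs_fst_snd|]. unfold u, Csub; cbn [fst snd].
    rewrite !fst_Csum, !snd_Csum, !map_map.
    assert (Hfst := Rabs_cube_sum_increment_le d (fun k => fst (g k)) h M).
    assert (Hsnd := Rabs_cube_sum_increment_le d (fun k => snd (g k)) h M).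
    unfold cube_sum in Hfst, Hsnd.
    assert (Hf : Rabs (rsum (map (fun k => fst (g k)) (cube d (S M))) - rsum (map (fun k => fst (g k)) (cube d M)))
                 <= cube_sum d h (S M) - cube_sum d h M)
      by (apply Hfst; intros k Hk; eapply Rle_trans; [apply Rabs_fst_le_Cmod|]; auto).
    assert (Hs : Rabs (rsum (map (fun k => snd (g k)) (cube d (S M))) - rsum (map (fun k => snd (g k)) (cube d M)))
                 <= cube_sum d h (S M) - cube_sum d h M)
      by (apply Hsnd; intros k Hk; eapply Rle_trans; [apply Rabs_snd_le_Cmod|]; auto).
    lra. }
  destruct (Ccv_of_dominated_increments u (fun M => 2 * cube_sum d h M) (2 * Sb) Hinc)
    as [l [Hl Hbound]]; [intros M; pose proof (HSb M); lra|].
  rewrite (kseries_eq d g l Hl).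
  assert (Hu0 : Cmod (u 0%nat) <= cube_sum d h 0).
  { eapply Rle_trans; [apply Cmod_Csum_le|]. rewrite map_map. apply rsum_le.
    intros k Hk. apply Hg. eapply length_cube; eauto. }
  assert (0 <= cube_sum d h 0)
    by (apply rsum_nonneg; intros k Hk; eapply Rle_trans; [apply Cmod_ge0|]; apply Hg; eapply length_cube; eauto).
  pose proof (Hbound 0%nat). pose proof (Cmod_le_Csub l (u 0%nat)). lra.
Qed.

(** * Wavelet series *)

Lemma Rpower_2_mul_INR g j : Rpower 2 (g * INR j) = Rpower 2 g ^ j.
Proof. rewrite <- Rpower_mult. apply Rpower_pow. apply exp_pos. Qed.

Lemma Rpower_2_gt_1 g : 0 < g -> 1 < Rpower 2 g.
Proof. intros Hg. rewrite <- (Rpower_O 2) by lra. apply Rpower_lt; lra. Qed.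

Lemma Rpower_2_lt_1 g : g < 0 -> Rpower 2 g < 1.
Proof. intros Hg. rewrite <- (Rpower_O 2) by lra. apply Rpower_lt; lra. Qed.

Lemma le_Rpower_interpolation t A B e :
  0 <= t -> t <= A -> t <= B -> 0 < A -> 0 < B -> 0 < e < 1 ->
  t <= Rpower A (1 - e) * Rpower B e.
Proof.
  intros Ht HA HB HA0 HB0 He. destruct Ht as [Ht|<-].
  - replace t with (Rpower t (1 - e) * Rpower t e)
      by (rewrite <- Rpower_plus; replace (1 - e + e) with 1 by ring; apply Rpower_1; lra).
    apply Rmult_le_compat; try (left; apply exp_pos); apply Rle_Rpower_l; lra.
  - pose proof (exp_pos ((1 - e) * ln A)); pose proof (exp_pos (e * ln B)).
    unfold Rpower. nra.
Qed.

Lemma exists_interpolation_exponent g0 g a :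
  g0 < g -> exists e, 0 < e < 1 /\ g0 + e * (a - g0) <= g.
Proof.
  intros Hg. set (e := Rmin (1 / 2) ((g - g0) / (Rabs (a - g0) + 1))).
  pose proof (Rabs_pos (a - g0)). pose proof (Rle_abs (a - g0)).
  assert (Hq : 0 < (g - g0) / (Rabs (a - g0) + 1)) by (apply Rdiv_lt_0_compat; lra).
  assert (He : 0 < e) by (apply Rmin_glb_lt; lra).
  assert (He1 : e <= (g - g0) / (Rabs (a - g0) + 1)) by apply Rmin_r.
  assert (He2 : e <= 1 / 2) by apply Rmin_l.
  exists e. split; [lra|].
  assert (e * (Rabs (a - g0) + 1) <= g - g0).
  { apply Rle_trans with ((g - g0) / (Rabs (a - g0) + 1) * (Rabs (a - g0) + 1)).
    - apply Rmult_le_compat_r; lra.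
    - right; field; lra. }
  nra.
Qed.

Lemma Rpower_2_rate_gap C V E e gamma :
  0 < C -> 0 <= e < gamma ->
  exists J1, forall J, (J1 <= J)%nat -> V + E * Rpower 2 (e * INR J) < C * Rpower 2 (gamma * INR J).
Proof.
  intros HC [He Hgap].
  assert (Hln : 0 < ln 2) by (rewrite <- ln_1; apply ln_increasing; lra).
  set (s := C * (gamma - e) * ln 2).
  assert (Hs : 0 < s) by (unfold s; apply Rmult_lt_0_compat; [apply Rmult_lt_0_compat|]; lra).
  destruct (INR_unbounded ((Rabs V + Rabs E) / s)) as [J1 HJ1].
  exists J1. intros J HJ.
  assert (HJ1J : INR J1 <= INR J) by (apply le_INR; exact HJ).
  set (P := Rpower 2 (e * INR J)). set (T := Rpower 2 ((gamma - e) * INR J)).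
  assert (HP : 1 <= P).
  { unfold P. rewrite <- (Rpower_O 2) by lra. apply Rle_Rpower; [lra|].
    apply Rmult_le_pos; [lra|apply pos_INR]. }
  assert (HT : 1 + (gamma - e) * INR J * ln 2 <= T).
  { unfold T, Rpower. rewrite Rmult_assoc. apply exp_ineq1_le. }
  assert (Hsplit : Rpower 2 (gamma * INR J) = P * T)
    by (unfold P, T; rewrite <- Rpower_plus; f_equal; ring).
  rewrite Hsplit.
  assert (Hbig : Rabs V + Rabs E < C * T).
  { assert ((Rabs V + Rabs E) / s * s = Rabs V + Rabs E) by (field; lra).
    assert (s * INR J1 <= s * INR J) by (apply Rmult_le_compat_l; lra).
    unfold s in *. nra. }
  pose proof (Rle_abs V). pose proof (Rle_abs E). pose proof (Rabs_pos V). pose proof (Rabs_pos E).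
  nra.
Qed.

Lemma Dgamma_or_eventually_small (d N : nat) (psi : nat -> list R -> Cx)
  (c : nat -> nat -> list Z -> Cx) (delta : R) (x : list R) :
  Dgamma d N psi c delta x \/
  exists J0, forall i j k, (J0 <= j)%nat -> (i < N)%nat -> length k = d ->
    Cmod (term psi c i j k x) <= Rpower 2 (delta * INR j).
Proof.
  destruct (classic (forall J0, exists i j k, (J0 <= j)%nat /\ (i < N)%nat /\ length k = d /\
              Cmod (term psi c i j k x) > Rpower 2 (delta * INR j))) as [Hbig|Hnot].
  - left.
    assert (Hchoice : forall J0, exists t : nat * nat * list Z, (J0 <= snd (fst t))%nat /\
              (fst (fst t) < N)%nat /\ length (snd t) = d /\
              Cmod (term psi c (fst (fst t)) (snd (fst t)) (snd t) x) > Rpower 2 (delta * INR (snd (fst t)))).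
    { intros J0. destruct (Hbig J0) as [i [j [k Hijk]]]. exists (i, j, k). exact Hijk. }
    set (t := fun J0 => proj1_sig (constructive_indefinite_description _ (Hchoice J0))).
    assert (Ht : forall J0, _) by (intros J0; exact (proj2_sig (constructive_indefinite_description _ (Hchoice J0)))).
    exists 1. split; [lra|].
    exists (fun n => fst (fst (t n))), (fun n => snd (fst (t n))), (fun n => snd (t n)). split.
    + intros M. exists M. intros n Hn. destruct (Ht n) as [Hj _]. unfold t. lia.
    + intros n. destruct (Ht n) as [Hj [Hi [Hk Hgt]]]. unfold t. repeat split; auto. lra.
  - right. apply not_all_ex_not in Hnot as [J0 HJ0]. exists J0. intros i j k Hj Hi Hk.
    apply Rnot_lt_le. intros Hgt. apply HJ0. exists i, j, k. auto.
Qed.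

Section Wavelet_series.

Variables (d N : nat) (psi : nat -> list R -> Cx) (c : nat -> nat -> list Z -> Cx) (a C0' : R).
Hypothesis Hd : (1 <= d)%nat.
Hypothesis Hdecay : forall i, (i < N)%nat -> forall n, n > 0 -> exists Cn, forall y, length y = d ->
  Cmod (psi i y) <= Cn * Rpower (1 + Rnorm y) (- n).
Hypothesis HC0 : C0' > 0.
Hypothesis Hcoef : forall i j k, (i < N)%nat -> length k = d ->
  Cmod (c i j k) <= C0' * Rpower 2 (a * INR j).

Definition level (x : list R) (j : nat) : Cx :=
  Csum (map (fun i => kseries d (fun k => term psi c i j k x)) (seq 0 N)).

Lemma PJ_psum_level J x : PJ d N psi c J x = psum (level x) J.
Proof. reflexivity. Qed.

Lemma uniform_decay n : n > 0 -> exists Cn, Cn > 0 /\ forall i y, (i < N)%nat -> length y = d ->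
  Cmod (psi i y) <= Cn * Rpower (1 + Rnorm y) (- n).
Proof.
  intros Hn.
  enough (H : forall m, (m <= N)%nat -> exists Cn, Cn > 0 /\ forall i y, (i < m)%nat -> length y = d ->
            Cmod (psi i y) <= Cn * Rpower (1 + Rnorm y) (- n)) by (apply H; lia).
  induction m as [|m IH]; intros Hm.
  - exists 1. split; [lra|]. intros; lia.
  - destruct (IH ltac:(lia)) as [C1 [HC1 H1]]. destruct (Hdecay m ltac:(lia) n Hn) as [C2 H2].
    exists (Rmax C1 (Rmax C2 1)).
    pose proof (Rmax_l C1 (Rmax C2 1)); pose proof (Rmax_r C1 (Rmax C2 1)); pose proof (Rmax_l C2 1).
    split; [lra|]. intros i y Hi Hy. pose proof (exp_pos (- n * ln (1 + Rnorm y))).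
    unfold Rpower in *. destruct (Nat.eq_dec i m) as [->|Hne].
    + eapply Rle_trans; [apply H2; exact Hy|]. apply Rmult_le_compat_r; lra.
    + eapply Rle_trans; [apply H1; [lia|exact Hy]|]. apply Rmult_le_compat_r; lra.
Qed.

(* Interpolating between the bound [A] and the decay of [psi] with exponent [2d/e]
   leaves exactly the decay [(1 + |y|)^(-2d)], which is summable over the lattice. *)
Lemma Cmod_term_le_interpolation e : 0 < e < 1 -> exists K, K > 0 /\
  forall i j k x A, (i < N)%nat -> length x = d -> length k = d -> A > 0 ->
  Cmod (term psi c i j k x) <= A ->
  Cmod (term psi c i j k x) <= K * Rpower A (1 - e) * Rpower 2 (a * e * INR j) / qprod (dil j k x).
Proof.
  intros He.
  assert (Hn : 2 * INR d / e > 0).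
  { apply Rdiv_lt_0_compat; [|lra]. apply le_INR in Hd. cbn in Hd. lra. }
  destruct (uniform_decay _ Hn) as [Cn [HCn Hpsi]].
  exists (Rpower (C0' * Cn) e). split; [apply exp_pos|].
  intros i j k x A Hi Hx Hk HA HtA.
  set (y := dil j k x).
  assert (Hy : length y = d) by (unfold y; rewrite length_dil; lia).
  assert (Hr : 0 <= Rnorm y) by apply sqrt_pos.
  set (B := C0' * Rpower 2 (a * INR j) * (Cn * Rpower (1 + Rnorm y) (- (2 * INR d / e)))).
  assert (HtB : Cmod (term psi c i j k x) <= B).
  { unfold term, B. rewrite Cmod_mul.
    apply Rmult_le_compat; try apply Cmod_ge0; [apply Hcoef|apply Hpsi]; auto. }
  assert (HB : 0 < B)
    by (unfold B, Rpower; repeat apply Rmult_lt_0_compat; try apply exp_pos; lra).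
  eapply Rle_trans; [apply (le_Rpower_interpolation _ A B e); auto using Cmod_ge0|].
  assert (HBe : Rpower B e
    = Rpower (C0' * Cn) e * Rpower 2 (a * e * INR j) / (1 + Rnorm y) ^ (2 * d)).
  { unfold B.
    rewrite <- !Rpower_mult_distr by (try apply Rmult_lt_0_compat; try apply exp_pos; lra).
    rewrite !Rpower_mult.
    replace (- (2 * INR d / e) * e) with (- INR (2 * d)) by (rewrite mult_INR; cbn; field; lra).
    rewrite Rpower_Ropp, Rpower_pow by lra.
    replace (a * INR j * e) with (a * e * INR j) by ring. unfold Rdiv. ring. }
  rewrite HBe. unfold Rdiv.
  replace (Rpower A (1 - e) * (Rpower (C0' * Cn) e * Rpower 2 (a * e * INR j) * / (1 + Rnorm y) ^ (2 * d)))
    with (Rpower (C0' * Cn) e * Rpower A (1 - e) * Rpower 2 (a * e * INR j) * / (1 + Rnorm y) ^ (2 * d))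
    by ring.
  apply Rmult_le_compat_l.
  - unfold Rpower. left. repeat apply Rmult_lt_0_compat; apply exp_pos.
  - apply Rinv_le_contravar; [pose proof (qprod_ge_1 y); lra|].
    rewrite <- Hy. apply qprod_le_pow_Rnorm.
Qed.

Lemma level_bound g0 g C1 : g0 < g -> C1 > 0 -> exists K, K > 0 /\
  forall x j, length x = d ->
  (forall i k, (i < N)%nat -> length k = d -> Cmod (term psi c i j k x) <= C1 * Rpower 2 (g0 * INR j)) ->
  Cmod (level x j) <= K * Rpower 2 (g * INR j).
Proof.
  intros Hg HC1.
  destruct (exists_interpolation_exponent g0 g a Hg) as [e [He Heg]].
  destruct (Cmod_term_le_interpolation e He) as [K [HK Hterm]].
  set (K1 := 4 * 8 ^ d * K * Rpower C1 (1 - e)).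
  assert (HK1 : K1 > 0)
    by (unfold K1, Rpower; repeat apply Rmult_lt_0_compat; try apply exp_pos; try apply pow_lt; lra).
  exists ((INR N + 1) * K1). split; [pose proof (pos_INR N); nra|].
  intros x j Hx Hj.
  set (A := C1 * Rpower 2 (g0 * INR j)).
  assert (HA : A > 0) by (unfold A, Rpower; apply Rmult_lt_0_compat; [lra|apply exp_pos]).
  assert (Hks : forall i, (i < N)%nat ->
            Cmod (kseries d (fun k => term psi c i j k x)) <= K1 * Rpower 2 (g * INR j)).
  { intros i Hi.
    eapply Rle_trans.
    { apply (Cmod_kseries_le d _ (fun k => K * Rpower A (1 - e) * Rpower 2 (a * e * INR j) / qprod (dil j k x))).
      - intros k Hk. apply Hterm; auto.
      - intros M. unfold cube_sum. unfold Rdiv. rewrite rsum_scal. apply Rmult_le_compat_l.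
        + unfold Rpower. left. repeat apply Rmult_lt_0_compat; try apply exp_pos; lra.
        + apply cube_sum_inv_qprod_dil_le; auto. }
    assert (Hpow : Rpower A (1 - e) * Rpower 2 (a * e * INR j)
                   = Rpower C1 (1 - e) * Rpower 2 ((g0 + e * (a - g0)) * INR j)).
    { unfold A. rewrite <- Rpower_mult_distr by (auto; apply exp_pos).
      rewrite Rpower_mult, Rmult_assoc, <- Rpower_plus. f_equal. f_equal. ring. }
    assert (Hle : Rpower 2 ((g0 + e * (a - g0)) * INR j) <= Rpower 2 (g * INR j))
      by (apply Rle_Rpower; [lra|]; apply Rmult_le_compat_r; [apply pos_INR|lra]).
    replace (4 * (K * Rpower A (1 - e) * Rpower 2 (a * e * INR j) * 8 ^ d))
      with (4 * 8 ^ d * K * (Rpower A (1 - e) * Rpower 2 (a * e * INR j))) by ring.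
    rewrite Hpow. unfold K1. rewrite !Rmult_assoc.
    apply Rmult_le_compat_l; [lra|]. apply Rmult_le_compat_l; [left; apply pow_lt; lra|].
    apply Rmult_le_compat_l; [lra|]. apply Rmult_le_compat_l; [left; apply exp_pos|]. exact Hle. }
  eapply Rle_trans; [apply Cmod_Csum_le|]. rewrite map_map.
  eapply Rle_trans; [apply (rsum_le _ (fun _ => K1 * Rpower 2 (g * INR j)))|].
  { intros i Hi. apply Hks. apply in_seq in Hi. lia. }
  rewrite rsum_const, length_seq. pose proof (exp_pos (g * INR j * ln 2)). unfold Rpower in *. nra.
Qed.

Lemma PJ_cv_rate x gamma g C1 : length x = d -> gamma < g < 0 -> C1 > 0 ->
  (forall i j k, (i < N)%nat -> length k = d ->
     Cmod (term psi c i j k x) <= C1 * Rpower 2 (gamma * INR j)) ->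
  exists l D, D > 0 /\ Ccv (fun J => PJ d N psi c J x) l /\
    forall J, Cmod (Csub l (PJ d N psi c J x)) <= D * Rpower 2 (g * INR J).
Proof.
  intros Hx [Hg Hg0] HC1 Hterm.
  destruct (level_bound gamma g C1 Hg HC1) as [K [HK Hlevel]].
  set (q := Rpower 2 g).
  assert (Hq : 0 <= q < 1) by (split; [left; apply exp_pos|apply Rpower_2_lt_1; exact Hg0]).
  destruct (psum_geometric_cv (level x) K q ltac:(lra) Hq) as [l [Hl Hbound]].
  { intros j. unfold q. rewrite <- Rpower_2_mul_INR. apply Hlevel; auto. }
  exists l, (2 * K / (1 - q)). split; [apply Rdiv_lt_0_compat; lra|]. split; [exact Hl|].
  intros J. rewrite PJ_psum_level, Rpower_2_mul_INR. apply Hbound.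
Qed.

Lemma PJ_growth x delta e J0 : length x = d -> delta < e -> 0 < e ->
  (forall i j k, (J0 <= j)%nat -> (i < N)%nat -> length k = d ->
     Cmod (term psi c i j k x) <= Rpower 2 (delta * INR j)) ->
  exists V E, forall J, (J0 <= J)%nat -> Cmod (PJ d N psi c J x) <= V + E * Rpower 2 (e * INR J).
Proof.
  intros Hx Hde He Hsmall.
  destruct (level_bound delta e 1 Hde ltac:(lra)) as [K [HK Hlevel]].
  set (r := Rpower 2 e).
  assert (Hr : 1 < r) by (apply Rpower_2_gt_1; exact He).
  exists (Cmod (psum (level x) J0)), (K * r / (r - 1)). intros J HJ.
  rewrite PJ_psum_level, Rpower_2_mul_INR.
  apply (psum_geometric_growth _ K r J0); auto; [lra|].
  intros j Hj. unfold r. rewrite <- Rpower_2_mul_INR. apply Hlevel; [exact Hx|].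
  intros i k Hi Hk. rewrite Rmult_1_l. apply Hsmall; auto.
Qed.

Lemma PJ_cv_with_rates x gamma : length x = d -> gamma < 0 ->
  (exists C1, C1 > 0 /\ forall i j k, (i < N)%nat -> length k = d ->
     Cmod (term psi c i j k x) <= C1 * Rpower 2 (gamma * INR j)) ->
  exists f, Ccv (fun J => PJ d N psi c J x) f /\
    forall gamma', gamma' > gamma -> exists C2, C2 > 0 /\
      forall J, Cmod (Csub f (PJ d N psi c J x)) <= C2 * Rpower 2 (gamma' * INR J).
Proof.
  intros Hx Hg [C1 [HC1 Hterm]].
  destruct (PJ_cv_rate x gamma (gamma / 2) C1 Hx ltac:(lra) HC1 Hterm) as [f [_ [_ [Hf _]]]].
  exists f. split; [exact Hf|]. intros gamma' Hg'.
  set (g := Rmin gamma' (gamma / 2)).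
  assert (Hgg : gamma < g < 0) by (unfold g; split; [apply Rmin_glb_lt|pose proof (Rmin_r gamma' (gamma / 2))]; lra).
  destruct (PJ_cv_rate x gamma g C1 Hx Hgg HC1 Hterm) as [l [D [HD [Hl Hbound]]]].
  rewrite <- (Ccv_unique _ _ _ Hl Hf).
  exists D. split; [exact HD|]. intros J. eapply Rle_trans; [apply Hbound|].
  apply Rmult_le_compat_l; [lra|]. apply Rle_Rpower; [lra|].
  apply Rmult_le_compat_r; [apply pos_INR|apply Rmin_l].
Qed.

Lemma Dgamma_of_PJ_divergence x gamma delta : length x = d -> gamma > 0 -> delta < gamma ->
  (exists C, C > 0 /\ exists jn : nat -> nat, tends_to_infty jn /\
     forall n, Cmod (PJ d N psi c (jn n) x) >= C * Rpower 2 (gamma * INR (jn n))) ->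
  Dgamma d N psi c delta x.
Proof.
  intros Hx Hg Hdg [C [HC [jn [Hjn Hgrow]]]].
  destruct (Dgamma_or_eventually_small d N psi c delta x) as [HD|[J0 Hsmall]]; [exact HD|exfalso].
  set (e := (Rmax delta 0 + gamma) / 2).
  assert (He : delta < e /\ 0 < e < gamma)
    by (pose proof (Rmax_l delta 0); pose proof (Rmax_r delta 0);
        pose proof (Rmax_lub_lt delta 0 gamma ltac:(lra) ltac:(lra)); unfold e; lra).
  destruct (PJ_growth x delta e J0 Hx (proj1 He) (proj1 (proj2 He)) Hsmall) as [V [E HVE]].
  destruct (Rpower_2_rate_gap C V E e gamma HC ltac:(lra)) as [J1 HJ1].
  destruct (Hjn (max J0 J1)) as [n0 Hn0]. specialize (Hn0 n0 (le_n _)).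
  pose proof (Hgrow n0). pose proof (HVE (jn n0) ltac:(lia)). pose proof (HJ1 (jn n0) ltac:(lia)).
  lra.
Qed.

End Wavelet_series.

Theorem mainTheorem1 :
  forall (d N : nat) (psi : nat -> list R -> Cx),
  (1 <= d)%nat -> (1 <= N)%nat ->
  (forall i, (i < N)%nat -> exists B, forall x, length x = d -> Cmod (psi i x) <= B) ->
  (forall i, (i < N)%nat -> forall n, n > 0 -> exists Cn, forall x, length x = d ->
      Cmod (psi i x) <= Cn * Rpower (1 + Rnorm x) (- n)) ->
  forall (c : nat -> nat -> list Z -> Cx) (a C0' : R),
  C0' > 0 ->
  (forall i j k, (i < N)%nat -> length k = d -> Cmod (c i j k) <= C0' * Rpower 2 (a * INR j)) ->
  (forall (gamma : R) (x : list R), gamma < 0 -> length x = d ->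
     (exists C1, C1 > 0 /\ forall i j k, (i < N)%nat -> length k = d ->
        Cmod (term psi c i j k x) <= C1 * Rpower 2 (gamma * INR j)) ->
     exists f : Cx,
       Ccv (fun J => PJ d N psi c J x) f /\
       forall gamma', gamma' > gamma -> exists C2, C2 > 0 /\
         forall J : nat, Cmod (Csub f (PJ d N psi c J x)) <= C2 * Rpower 2 (gamma' * INR J))
  /\
  (forall (gamma : R) (x : list R), gamma > 0 -> length x = d ->
     (exists C, C > 0 /\ exists jn : nat -> nat, tends_to_infty jn /\
        forall n, Cmod (PJ d N psi c (jn n) x) >= C * Rpower 2 (gamma * INR (jn n))) ->
     forall delta, delta < gamma -> Dgamma d N psi c delta x).
Proof.
  intros d N psi Hd _ _ Hdecay c a C0' HC0 Hcoef. split.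
  - intros gamma x Hg Hx Hterm.
    exact (PJ_cv_with_rates d N psi c a C0' Hd Hdecay HC0 Hcoef x gamma Hx Hg Hterm).
  - intros gamma x Hg Hx Hdiv delta Hdg.
    exact (Dgamma_of_PJ_divergence d N psi c a C0' Hd Hdecay HC0 Hcoef x gamma delta Hx Hg Hdg Hdiv).
Qed.
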